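(* Let $G=(V,E,H)$ be a HEDG and $X,Y,Z,U\subseteq V$ with $U\cap(X\cup Y\cup Z)=\emptyset$. Then $X\perp^d_G Y\mid Z$ if and only if $X\perp^d_{G^{\mathrm{marg}\setminus U}}Y\mid Z$.
   Context: HEDG $G=(V,E,H)$: $V$ finite, $E\subseteq V\times V$ (self-loops allowed), $H$ a simplicial complex on $V$ (contains singletons, closed under subsets); for distinct $v,w$, $v\leftrightarrow w$ means $\{v,w\}\in H$. $\mathrm{Anc}^G(Z)$: nodes with a directed path into $Z$ (including $Z$). Marginalization $G^{\mathrm{marg}\setminus U}=(V\setminus U,E',H')$: $v_1\to v_2\in E'$ iff $G$ has a directed path $v_1\to u_1\to\cdots\to u_r\to v_2$ ($r\ge0$, all $u_i\in U$); $F'\subseteq V\setminus U$ is in $H'$ iff there is $F\in H$, $F\subseteq F'\cup U$, such that each $v\in F'$ lies in $F\setminus U$ or is reached by a directed path $u_1\to\cdots\to u_r\to v$ ($r\ge1$, $u_i\in U$, $u_1\in F\cap U$). A path is a node sequence $v_1,\dots,v_n$ ($n\ge1$, repetitions allowed) with consecutive nodes joined by $\to$, $\leftarrow$ or $\leftrightarrow$. It is $Z$-blocked if $v_1\in Z$ or $v_n\in Z$, or some intermediate $v_i$ is a collider (both adjacent edges have an arrowhead at $v_i$) with $v_i\notin\mathrm{Anc}(Z)$, or some intermediate non-collider lies in $Z$. $X\perp^d Y\mid Z$ iff every path with one endnode in $X$ and the other in $Y$ is $Z$-blocked (ancestors and paths taken in the respective HEDG). *)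

From mathcomp Require Import all_boot.
Set Implicit Arguments. Unset Strict Implicit. Unset Printing Implicit Defensive.

(* A HEDG over a finite ambient type T: vertex set vs, directed edges ed
   (self-loops allowed), hyperedges hy (a simplicial complex on vs). *)
Record hedg (T : finType) := Hedg {
  vs : {set T};
  ed : T -> T -> Prop;
  hy : {set T} -> Prop }.

Definition wf_hedg (T : finType) (G : hedg T) : Prop :=
  (forall a b, ed G a b -> a \in vs G /\ b \in vs G) /\
  (forall F, hy G F -> F \subset vs G) /\
  (forall v, v \in vs G -> hy G [set v]) /\
  (forall F F' : {set T}, hy G F -> F' \subset F -> hy G F').

Fixpoint chain (T : Type) (r : T -> T -> Prop) (x : T) (p : seq T) : Prop :=
  match p with
  | [::] => True
  | y :: p' => r x y /\ chain r y p'
  end.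

Definition Anc (T : finType) (G : hedg T) (Z : {set T}) (v : T) : Prop :=
  v \in vs G /\ exists p : seq T, chain (ed G) v p /\ last v p \in Z.

(* Edge marks of a path step from a to b: Fwd = a -> b, Bwd = a <- b,
   Bi = a <-> b. *)
Inductive mark := Fwd | Bwd | Bi.

Definition step_ok (T : finType) (G : hedg T) (a : T) (m : mark) (b : T) : Prop :=
  match m with
  | Fwd => ed G a b
  | Bwd => ed G b a
  | Bi => a <> b /\ hy G [set a; b]
  end.

Fixpoint steps_ok (T : finType) (G : hedg T) (a : T) (s : seq (mark * T)) : Prop :=
  match s with
  | [::] => True
  | (m, b) :: s' => step_ok G a m b /\ steps_ok G b s'
  end.

Definition pnodes (T : finType) (v1 : T) (s : seq (mark * T)) : seq T :=
  v1 :: map snd s.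

Definition is_path (T : finType) (G : hedg T) (v1 : T) (s : seq (mark * T)) : Prop :=
  all (fun v => v \in vs G) (pnodes v1 s) /\ steps_ok G v1 s.

(* arrowhead at the end node of an incoming step / at the start node of an
   outgoing step *)
Definition head_in (m : mark) : bool := if m is Bwd then false else true.
Definition head_out (m : mark) : bool := if m is Fwd then false else true.

Definition blocked (T : finType) (G : hedg T) (Z : {set T}) (v1 : T)
    (s : seq (mark * T)) : Prop :=
  v1 \in Z \/ last v1 (map snd s) \in Z \/
  exists i : nat, 0 < i < size s /\
    let vi := nth v1 (pnodes v1 s) i in
    let min := (nth (Fwd, v1) s i.-1).1 in
    let mout := (nth (Fwd, v1) s i).1 in
    if head_in min && head_out mout
    then ~ Anc G Z vi
    else vi \in Z.

Definition dsep (T : finType) (G : hedg T) (X Y Z : {set T}) : Prop :=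
  forall (v1 : T) (s : seq (mark * T)), is_path G v1 s ->
    ((v1 \in X /\ last v1 (map snd s) \in Y) \/
     (v1 \in Y /\ last v1 (map snd s) \in X)) ->
    blocked G Z v1 s.

Definition marg (T : finType) (G : hedg T) (U : {set T}) : hedg T :=
  Hedg (vs G :\: U)
    (fun a b => a \in vs G :\: U /\ b \in vs G :\: U /\
       exists p : seq T, chain (ed G) a (rcons p b) /\ all (fun u => u \in U) p)
    (fun F' => F' \subset vs G :\: U /\
       exists F, hy G F /\ F \subset F' :|: U /\
         forall v, v \in F' ->
           v \in F :\: U \/
           exists u1 (p : seq T), u1 \in F :&: U /\
             chain (ed G) u1 (rcons p v) /\ all (fun u => u \in U) p).

(* Open walks transfer in both directions.  An edge of [marg G U] unfolds into a
   walk of [G] through [U] without colliders, so an open walk of the marginal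
   graph expands into an open walk of [G]; ancestors of [Z] outside [U] are the
   same in both graphs.  Conversely, in an open walk of [G] every collider in [U]
   is an ancestor of [Z]; replacing it by a detour down to [Z] and back leaves
   the walk open and makes every vertex of [U] a non-collider.  The maximal
   segments through [U] of that walk then contract to edges of the marginal
   graph, giving an open walk there. *)

From mathcomp Require Import all_boot.
From Stdlib Require Import Classical.
Set Implicit Arguments. Unset Strict Implicit. Unset Printing Implicit Defensive.

Section Chains.
Variable A : Type.
Implicit Type r : A -> A -> Prop.

Lemma chain_cat r x p q : chain r x (p ++ q) <-> chain r x p /\ chain r (last x p) q.
Proof. by elim: p x => [|y p IH] x /=; [tauto | rewrite IH]; tauto. Qed.

Lemma chain_rcons r x p y : chain r x (rcons p y) <-> chain r x p /\ r (last x p) y.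
Proof. by rewrite -cats1 chain_cat /=; tauto. Qed.

Lemma chain_rev r x p y :
  chain r x (rcons p y) -> chain (fun a b => r b a) y (rcons (rev p) x).
Proof.
elim: p x => [|z p IH] x /= [r_xz]; first by [].
by move/IH; rewrite rev_cons !chain_rcons last_rcons.
Qed.

Lemma chain_first_hit r (P : pred A) x p :
  chain r x p -> P (last x p) -> ~~ P x ->
  exists p1 z, [/\ chain r x (rcons p1 z), P z & all (predC P) p1].
Proof.
elim: p x => [|y p IH] x /= => [_ -> //|[r_xy y_p] Pend Px].
have [Py|nPy] := boolP (P y); first by exists [::], y.
by have [p1 [z [y_z Pz p1P]]] := IH y y_p Pend nPy; exists (y :: p1), z; rewrite /= nPy.
Qed.

End Chains.

Section Walks.
Variable T : finType.
Implicit Types (G : hedg T) (Z : {set T}) (a b v : T) (m mi mo : mark).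
Implicit Types (s : seq (mark * T)).

Definition path_end v s : T := last v (map snd s).
Definition last_mark m s : mark := last m (map fst s).

Lemma path_end_cat v s1 s2 : path_end v (s1 ++ s2) = path_end (path_end v s1) s2.
Proof. by rewrite /path_end map_cat last_cat. Qed.

Lemma last_mark_cat m s1 s2 : last_mark m (s1 ++ s2) = last_mark (last_mark m s1) s2.
Proof. by rewrite /last_mark map_cat last_cat. Qed.

Lemma path_end_pair v m q : path_end v (map (pair m) q) = last v q.
Proof. by rewrite /path_end -map_comp map_id. Qed.

Lemma last_mark_pair mi m q x : last_mark mi (map (pair m) (rcons q x)) = m.
Proof. by rewrite /last_mark -map_comp map_rcons last_rcons. Qed.

Lemma steps_ok_cat G a s1 s2 :
  steps_ok G a (s1 ++ s2) <-> steps_ok G a s1 /\ steps_ok G (path_end a s1) s2.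
Proof. by elim: s1 a => [|[m b] s1 IH] a /=; [tauto | rewrite IH]; tauto. Qed.

Lemma steps_ok_Fwd G a q : steps_ok G a (map (pair Fwd) q) <-> chain (ed G) a q.
Proof. by elim: q a => [|y q IH] a /=; [tauto | rewrite IH]. Qed.

Lemma steps_ok_Bwd G a q :
  steps_ok G a (map (pair Bwd) q) <-> chain (fun x y => ed G y x) a q.
Proof. by elim: q a => [|y q IH] a /=; [tauto | rewrite IH]. Qed.

Definition vertex_closed G : Prop :=
  (forall a b, ed G a b -> a \in vs G /\ b \in vs G) /\
  (forall F, hy G F -> F \subset vs G).

Lemma step_ok_vs G a m b : vertex_closed G -> step_ok G a m b -> b \in vs G.
Proof.
case=> edG hyG; case: m => /= [/edG[]|/edG[]|[_ /hyG/subsetP]] //.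
by apply; rewrite !inE eqxx orbT.
Qed.

Lemma steps_ok_path G a s :
  vertex_closed G -> a \in vs G -> steps_ok G a s -> is_path G a s.
Proof.
move=> clG a_G s_ok; split=> //.
elim: s a a_G s_ok => [|[m b] s IH] a /= a_G; first by rewrite a_G.
by case=> /(step_ok_vs clG) b_G /(IH b b_G); rewrite a_G.
Qed.

(* [junctions P mi v s] asks [P min x mout] at every vertex [x] of the walk
   [v, s] that has an outgoing step [mout]; [min] is the mark of the step into
   [x], and [mi] for [v]. *)
Fixpoint junctions (P : mark -> T -> mark -> Prop) mi v s : Prop :=
  if s is (mo, b) :: s' then P mi v mo /\ junctions P mo b s' else True.

Lemma junctions_cat P mi v s1 s2 :
  junctions P mi v (s1 ++ s2) <->
  junctions P mi v s1 /\ junctions P (last_mark mi s1) (path_end v s1) s2.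
Proof. by elim: s1 mi v => [|[mo b] s1 IH] mi v /=; [tauto | rewrite IH]; tauto. Qed.

Lemma junctions_first (P : mark -> T -> mark -> Prop) mi mi' v s :
  (forall mo, P mi v mo -> P mi' v mo) -> junctions P mi v s -> junctions P mi' v s.
Proof. by case: s => [|[mo b] s] //= PP [/PP]. Qed.

Lemma junctionsP P mi v s :
  junctions P mi v s <-> forall i, i < size s ->
    P (nth (mi, v) ((mi, v) :: s) i).1 (nth (mi, v) ((mi, v) :: s) i).2
      (nth (mi, v) s i).1.
Proof.
elim: s mi v => [|[mo b] s IH] mi v /=; first by [].
have nthE i : i < size s -> forall x y, nth x ((mo, b) :: s) i = nth y ((mo, b) :: s) i.
  by move=> lt_i x y; apply: set_nth_default; rewrite /= ltnW.
rewrite IH; split=> [[P0 Ps] [|i] //= lt_i|Ps].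
  by rewrite (nthE i lt_i _ (mo, b)) (set_nth_default (mo, b)) //; apply: Ps.
split=> [|i lt_i]; first exact: (Ps 0).
by rewrite (nthE i lt_i (mo, b) (mi, v)) (set_nth_default (mi, v)) //; apply: (Ps i.+1).
Qed.

Lemma junctions_Fwd P mi x q :
  (forall mi' v, v \in belast x q -> P mi' v Fwd) -> junctions P mi x (map (pair Fwd) q).
Proof.
elim: q mi x => [|y q IH] mi x //= Pq; split; first by apply: Pq; rewrite inE eqxx.
by apply: IH => mi' v v_q; apply: Pq; rewrite inE v_q orbT.
Qed.

Lemma junctions_Bwd P mi x q :
  P mi x Bwd -> (forall v, v \in q -> P Bwd v Bwd) -> junctions P mi x (map (pair Bwd) q).
Proof.
elim: q mi x => [|y q IH] mi x //= Px Pq; split=> //.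
by apply: IH => [|v v_q]; apply: Pq; rewrite inE ?eqxx ?v_q ?orbT.
Qed.

Definition collider mi mo : bool := head_in mi && head_out mo.

Definition noncollider : rel mark := fun mi mo => ~~ collider mi mo.

Definition open_at G Z mi v mo : Prop :=
  if collider mi mo then Anc G Z v else v \notin Z.

Lemma collider_heads mi mi' mo mo' :
  head_in mi = head_in mi' -> head_out mo = head_out mo' -> collider mi mo = collider mi' mo'.
Proof. by rewrite /collider => -> ->. Qed.

(* The virtual incoming mark [Bwd] makes [v1] a non-collider, so the first
   junction says [v1 \notin Z]. *)
Lemma not_blockedP G Z v1 s :
  ~ blocked G Z v1 s <-> path_end v1 s \notin Z /\ junctions (open_at G Z) Bwd v1 s.
Proof.
have nodeE j : j.+1 < size s ->
    (nth (Bwd, v1) ((Bwd, v1) :: s) j.+1).2 = nth v1 (pnodes v1 s) j.+1.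
  by move=> lt_j; rewrite /= (nth_map (Bwd, v1)) // ltnW.
have markE j : j < size s -> (nth (Bwd, v1) s j).1 = (nth (Fwd, v1) s j).1.
  by move=> lt_j; rewrite (set_nth_default (Fwd, v1)).
split=> [NB|[end_Z /junctionsP J] [|[|[i [/andP[i_gt0 lt_i]]]]]].
- have v1_Z : v1 \notin Z by apply/negP => v1_Z; apply: NB; left.
  have end_Z : path_end v1 s \notin Z by apply/negP => e_Z; apply: NB; right; left.
  split=> //; apply/junctionsP => -[|j] lt_j //.
  rewrite /open_at /collider nodeE // (markE j (ltnW lt_j)) markE //.
  by case: ifP => C; [apply: NNPP | apply/negP] => B; apply: NB; right; right;
    exists j.+1; rewrite /= C.
- move=> v1_Z; case: s end_Z J {nodeE markE} => [|[mo b] s] /=.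
    by rewrite /path_end /= v1_Z.
  by move=> _ /(_ 0 isT); rewrite /open_at /= v1_Z.
- by move=> e_Z; rewrite /path_end e_Z in end_Z.
case: i i_gt0 lt_i => [|j] //= _ lt_j; have := J _ lt_j.
rewrite /open_at /collider nodeE // (markE j (ltnW lt_j)) markE //.
by case: ifP => _ A B; [exact: B A | exact: negP A B].
Qed.

Lemma dsep_of_open_transfer G G' Z X Y :
  (forall v1 s, is_path G v1 s -> v1 \in X :|: Y -> path_end v1 s \in X :|: Y ->
     junctions (open_at G Z) Bwd v1 s ->
     exists s', [/\ is_path G' v1 s', junctions (open_at G' Z) Bwd v1 s'
                  & path_end v1 s' = path_end v1 s]) ->
  dsep G' X Y Z -> dsep G X Y Z.
Proof.
move=> transfer sepG' v1 s s_path ends; apply: NNPP => /not_blockedP[end_Z J].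
have [v1_XY end_XY] : v1 \in X :|: Y /\ path_end v1 s \in X :|: Y.
  by case: ends => -[v1_in end_in]; rewrite !inE v1_in end_in ?orbT.
have [s' [s'_path J' s'_end]] := transfer v1 s s_path v1_XY end_XY J.
have s'_last : last v1 (map snd s') = last v1 (map snd s) := s'_end.
have := sepG' v1 s' s'_path; rewrite s'_last => /(_ ends).
by apply/not_blockedP; rewrite s'_end.
Qed.

Lemma junctions_noncollider G Z m b e :
  all [predC Z] (belast b (map snd e)) -> path noncollider m (map fst e) ->
  junctions (open_at G Z) m b e.
Proof.
elim: e m b => [|[mo c] e IH] m b //= /andP[b_Z nodes] /andP[nc marks].
by rewrite /open_at (negbTE nc); split; last exact: IH.
Qed.

(* [a <- .. <- x <-> y -> .. -> b] if [w = [:: y]], [a <- .. <- x -> .. -> b]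
   if [w = [::]]. *)
Definition trek (q1 w q2 : seq T) : seq (mark * T) :=
  map (pair Bwd) q1 ++ map (pair Bi) w ++ map (pair Fwd) q2.

Lemma trek_nodes q1 w q2 : map snd (trek q1 w q2) = q1 ++ w ++ q2.
Proof. by rewrite !map_cat -!map_comp !map_id. Qed.

Lemma steps_ok_trek G a q1 w q2 :
  steps_ok G a (trek q1 w q2) <->
  [/\ chain (fun x y => ed G y x) a q1, steps_ok G (last a q1) (map (pair Bi) w)
    & chain (ed G) (last (last a q1) w) q2].
Proof.
by rewrite !steps_ok_cat !path_end_pair steps_ok_Bwd steps_ok_Fwd; split=> [[? []]|[]].
Qed.

Lemma sorted_trek q1 w q2 : size w <= 1 -> sorted noncollider (map fst (trek q1 w q2)).
Proof.
have to_Fwd m q : path noncollider m (map fst (map (pair Fwd) q)).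
  by elim: q m => //= y q IH m; rewrite IH /noncollider /collider /= andbF.
move=> w_le1; elim: q1 => [|y q1 IH]; rewrite /trek /=.
  by case: w w_le1 => [|u [|]] //= _; case: q2 => //= y q; apply: to_Fwd.
by case: (map fst _) IH.
Qed.

Lemma head_out_trek q1 w q2 :
  head_out (head Fwd (map fst (trek q1 w q2))) = (q1 ++ w != [::]).
Proof. by case: q1 => [|? ?]; case: w => [|? ?] //; case: q2. Qed.

Lemma head_in_trek q1 w q2 :
  head_in (last Bwd (map fst (trek q1 w q2))) = (w ++ q2 != [::]).
Proof.
rewrite /trek !map_cat !last_cat -!map_comp.
case/lastP: q2 => [|q2 y]; last first.
  by rewrite map_rcons last_rcons -size_eq0 size_cat size_rcons addnS.
case/lastP: w => [|w u]; last by rewrite map_rcons last_rcons cats0 -size_eq0 size_rcons.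
by case/lastP: q1 => [|q1 y] //; rewrite map_rcons last_rcons.
Qed.

End Walks.

Section Marginalization.
Variables (T : finType) (G : hedg T) (U Z : {set T}).
Hypotheses (wfG : wf_hedg G) (UZ : [disjoint U & Z]) (Z_G : Z \subset vs G).

Local Notation GU := (marg G U).

Lemma U_notin_Z u : u \in U -> u \notin Z.
Proof. by move/(disjointFr UZ) ->. Qed.

Lemma Z_notin_U z : z \in Z -> z \notin U.
Proof. by apply: contraTN => /U_notin_Z. Qed.

Lemma ed_vs a b : ed G a b -> a \in vs G /\ b \in vs G.
Proof. by case: wfG => edG _; apply: edG. Qed.

Lemma vertex_closed_G : vertex_closed G.
Proof. by case: wfG => edG [hyG _]. Qed.

Lemma vertex_closed_marg : vertex_closed GU.
Proof. by split=> [a b [? [? _]] | F []]. Qed.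

Lemma hy_pair F x y : hy G F -> x \in F -> y \in F -> hy G [set x; y].
Proof.
case: wfG => _ [_ [_ hy_sub]] hyF xF yF; apply: (hy_sub F) => //.
by apply/subsetP => w; rewrite !inE => /orP[] /eqP ->.
Qed.

Lemma chain_of_marg a p :
  chain (ed GU) a p -> exists p', chain (ed G) a p' /\ last a p' = last a p.
Proof.
elim: p a => [|b p IH] a /=; first by exists [::].
case=> [[_ [_ [q [a_q_b _]]]]] /IH[p' [b_p' p'_end]].
by exists (rcons q b ++ p'); rewrite chain_cat last_cat last_rcons p'_end.
Qed.

Lemma chain_to_marg a p :
  a \in vs G :\: U -> chain (ed G) a p -> last a p \notin U ->
  exists p', chain (ed GU) a p' /\ last a p' = last a p.
Proof.
suff shortcut q : a \in vs G :\: U -> all [in U] q -> chain (ed G) a (q ++ p) ->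
    last a (q ++ p) \notin U -> exists p', chain (ed GU) a p' /\ last a p' = last a (q ++ p).
  by move=> a_GU; apply: (shortcut [::]).
elim: p a q => [|y p IH] a q a_GU qU.
  rewrite cats0; case/lastP: q qU => [|q u]; first by exists [::].
  by move=> /allP/(_ u); rewrite mem_rcons inE eqxx last_rcons => /(_ isT) ->.
rewrite -cat_rcons => a_q_y_p end_U.
case yU: (y \in U); first by apply: IH; rewrite // all_rcons yU.
move: a_q_y_p end_U; rewrite chain_cat chain_rcons last_cat last_rcons.
move=> -[[a_q q_y] y_p] end_U.
have y_GU : y \in vs G :\: U by rewrite inE yU (ed_vs q_y).2.
have [p' [y_p' p'_end]] := IH y [::] y_GU isT y_p end_U.
exists (y :: p'); split; last by rewrite /= p'_end.
by split=> //; split=> //; split=> //; exists q; rewrite chain_rcons.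
Qed.

Lemma Anc_marg v : v \in vs G :\: U -> Anc GU Z v <-> Anc G Z v.
Proof.
move=> v_GU; split=> [[_ [p [/chain_of_marg[p' [v_p' p'_end]] end_Z]]] | [_ [p [v_p end_Z]]]].
  by split; [case/setDP: v_GU | exists p'; rewrite p'_end].
split=> //; have [p' [v_p' p'_end]] := chain_to_marg v_GU v_p (Z_notin_U end_Z).
by exists p'; rewrite p'_end.
Qed.

Definition realized_step a m b : Prop :=
  exists e, [/\ steps_ok G a e, path_end a e = b &
    forall mi, open_at GU Z mi a m ->
      junctions (open_at G Z) mi a e /\ head_in (last_mark mi e) = head_in m].

Lemma realized_trek q1 w q2 I a b m :
  a \in vs G :\: U -> size w <= 1 -> chain (fun x y => ed G y x) a q1 ->
  steps_ok G (last a q1) (map (pair Bi) w) -> chain (ed G) (last (last a q1) w) q2 ->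
  q1 ++ w ++ q2 = rcons I b -> all [in U] I ->
  head_out m = (q1 ++ w != [::]) -> head_in m = (w ++ q2 != [::]) ->
  realized_step a m b.
Proof.
move=> a_GU w_le1 q1_ok w_ok q2_ok e_nodes IU m_out m_in; exists (trek q1 w q2).
have e_ok : steps_ok G a (trek q1 w q2) by apply/steps_ok_trek.
split=> //; first by rewrite /path_end trek_nodes e_nodes last_rcons.
move: e_ok (trek_nodes q1 w q2) (sorted_trek q1 q2 w_le1) (head_out_trek q1 w q2)
  (head_in_trek q1 w q2); rewrite e_nodes.
case: (trek q1 w q2) => [|[m1 b1] e] _ /=; first by case: I {e_nodes IU}.
rewrite lastI => /rcons_inj[inner _] marks out1 in1 mi open_a.
split; last by rewrite /last_mark /= in1 m_in.
split; last first.
  by apply: junctions_noncollider => //; rewrite inner; apply: sub_all IU => u /U_notin_Z.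
move: open_a; rewrite /open_at /collider out1 -m_out.
by case: ifP => // _ /(Anc_marg a_GU).
Qed.

Lemma marg_step_realized a m b :
  a \in vs G :\: U -> step_ok GU a m b -> realized_step a m b.
Proof.
have nonnil (p : seq T) x : rcons p x != [::] by case: p.
move=> a_GU; case: m => /=.
- case=> _ [_ [p [a_p_b pU]]].
  by apply: (@realized_trek [::] [::] (rcons p b) p); rewrite //= nonnil.
- case=> _ [_ [p [b_p_a pU]]].
  apply: (@realized_trek (rcons (rev p) b) [::] [::] (rev p)); rewrite ?cats0 ?nonnil ?all_rev //.
  exact: chain_rev.
case=> a_b [ab_GU [F [hyF [_ reach]]]].
have a_U : a \notin U by case/setDP: a_GU.
have b_U : b \notin U by move/subsetP: ab_GU => /(_ b); rewrite !inE eqxx orbT => /(_ isT)/andP[].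
have hy_F x y : x \in F -> y \in F -> x <> y -> steps_ok G x [:: (Bi, y)].
  by move=> xF yF x_y; split=> //; split; last exact: hy_pair hyF xF yF.
have [/setDP[aF _] | [u1 [p1 [/setIP[u1F u1U] [u1_p1_a p1U]]]]] := reach a (setU11 _ _);
  have [/setDP[bF _] | [u2 [p2 [/setIP[u2F u2U] [u2_p2_b p2U]]]]] := reach b (setU1r _ (set11 _)).
- by apply: (@realized_trek [::] [:: b] [::] [::]) => //; apply: hy_F.
- apply: (@realized_trek [::] [:: u2] (rcons p2 b) (u2 :: p2)); rewrite //= ?u2U ?nonnil //.
  by apply: hy_F => // a_u2; rewrite a_u2 u2U in a_U.
- apply: (@realized_trek (rcons (rev p1) u1) [:: b] [::] (rcons (rev p1) u1));
    rewrite ?cats1 ?nonnil ?all_rcons ?all_rev ?u1U ?last_rcons //; first exact: chain_rev.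
  by apply: hy_F => // u1_b; rewrite -u1_b u1U in b_U.
have [u1_u2|u1_u2] := eqVneq u1 u2.
  subst u2; apply: (@realized_trek (rcons (rev p1) u1) [::] (rcons p2 b) (rcons (rev p1) u1 ++ p2));
    rewrite ?cats0 ?rcons_cat ?nonnil ?all_cat ?all_rcons ?all_rev ?u1U ?p1U ?last_rcons //.
  exact: chain_rev.
apply: (@realized_trek (rcons (rev p1) u1) [:: u2] (rcons p2 b) (rcons (rev p1) u1 ++ u2 :: p2));
  rewrite /= ?rcons_cat ?all_cat ?all_rcons ?all_rev ?u1U ?p1U /= ?u2U ?p2U ?last_rcons
    ?cats1 ?nonnil //.
  exact: chain_rev.
by apply: hy_F => //; apply/eqP.
Qed.

Lemma open_walk_of_marg s mi a :
  a \in vs G :\: U -> steps_ok GU a s -> junctions (open_at GU Z) mi a s ->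
  exists s', [/\ steps_ok G a s', junctions (open_at G Z) mi a s' & path_end a s' = path_end a s].
Proof.
elim: s mi a => [|[m b] s IH] mi a a_GU /=; first by exists [::].
case=> a_m_b s_ok [open_a J].
have [s' [s'_ok J' s'_end]] := IH m b (step_ok_vs vertex_closed_marg a_m_b) s_ok J.
have [e [e_ok e_end /(_ mi open_a)[Je e_in]]] := marg_step_realized a_GU a_m_b.
exists (e ++ s'); split; last by rewrite path_end_cat e_end.
  by apply/steps_ok_cat; rewrite e_end.
apply/junctions_cat; rewrite e_end; split=> //; apply: junctions_first J' => mo.
by rewrite /open_at (collider_heads e_in (erefl (head_out mo))).
Qed.

Definition passable mi v mo : Prop :=
  if v \in U then is_true (noncollider mi mo) else open_at G Z mi v mo.

Lemma passable_noncollider mi v mo : v \notin Z -> noncollider mi mo -> passable mi v mo.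
Proof. by move=> v_Z nc; rewrite /passable /open_at (negbTE nc); case: ifP. Qed.

(* The detour [a -> .. -> z <- .. <- a] down to the first vertex [z] of [Z]
   below [a] makes both copies of [a] non-colliders. *)
Lemma detour a : a \in U -> Anc G Z a ->
  exists d, [/\ steps_ok G a d, path_end a d = a &
    forall mi, junctions passable mi a d /\ last_mark mi d = Bwd].
Proof.
move=> aU [_ [p [a_p end_Z]]].
have [p1 [z [a_p1_z zZ p1Z]]] := chain_first_hit a_p end_Z (U_notin_Z aU).
have ap1Z v : v \in a :: p1 -> v \notin Z.
  by rewrite inE => /orP[/eqP -> | /(allP p1Z)]; [exact: U_notin_Z|].
exists (map (pair Fwd) (rcons p1 z) ++ map (pair Bwd) (rcons (rev p1) a)); split.
- by apply/steps_ok_cat; rewrite steps_ok_Fwd steps_ok_Bwd path_end_pair last_rcons; split=> //;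
    apply: chain_rev.
- by rewrite path_end_cat !path_end_pair !last_rcons.
move=> mi; rewrite last_mark_cat !last_mark_pair; split=> //; apply/junctions_cat; split.
  by apply: junctions_Fwd => mi' v; rewrite belast_rcons => /ap1Z/passable_noncollider; apply;
    rewrite /noncollider /collider andbF.
rewrite last_mark_pair path_end_pair last_rcons; apply: junctions_Bwd.
  by rewrite /passable (negbTE (Z_notin_U zZ)); split; [apply: (subsetP Z_G) | exists [::]].
move=> v; rewrite mem_rcons inE mem_rev -in_cons => /ap1Z/passable_noncollider; exact.
Qed.

Lemma open_walk_passable s mi a :
  steps_ok G a s -> junctions (open_at G Z) mi a s ->
  exists s', [/\ steps_ok G a s', junctions passable mi a s' & path_end a s' = path_end a s].
Proof.
elim: s mi a => [|[m b] s IH] mi a /=; first by exists [::].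
case=> a_m_b s_ok [open_a J]; have [s' [s'_ok J' s'_end]] := IH m b s_ok J.
have [aU_coll|] := boolP ((a \in U) && collider mi m).
  case/andP: aU_coll open_a => aU coll; rewrite /open_at coll => Anc_a.
  have [d [d_ok d_end /(_ mi)[Jd d_last]]] := detour aU Anc_a.
  exists (d ++ (m, b) :: s'); split; last by rewrite path_end_cat d_end.
    by apply/steps_ok_cat; rewrite d_end.
  by apply/junctions_cat; rewrite d_end d_last /= /passable aU.
rewrite negb_and => not_aU_coll; exists ((m, b) :: s'); split=> //; split=> //.
by rewrite /passable; case: ifP not_aU_coll => //= _ /negPf ->.
Qed.

Definition U_reach (F : {set T}) x : Prop :=
  x \in F \/ exists u p, u \in F :&: U /\ chain (ed G) u (rcons p x) /\ all [in U] p.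

(* The connection through [U] that [marg] demands of an edge [a -m- v], without
   the conditions on the end vertices. *)
Definition U_link m a v : Prop :=
  match m with
  | Fwd => exists p, chain (ed G) a (rcons p v) /\ all [in U] p
  | Bwd => exists p, chain (ed G) v (rcons p a) /\ all [in U] p
  | Bi => exists F, [/\ hy G F, F \subset [set a; v] :|: U, U_reach F a & U_reach F v]
  end.

Lemma U_link_step v mo w : step_ok G v mo w -> U_link mo v w.
Proof.
case: mo => /= [vw|wv|[_ hy_vw]]; [by exists [::] | by exists [::] |].
by exists [set v; w]; split; rewrite ?subsetUl //; left; rewrite !inE eqxx ?orbT.
Qed.

Lemma U_link_extend m a v mo w :
  v \in U -> U_link m a v -> noncollider m mo -> step_ok G v mo w ->
  exists m', [/\ U_link m' a w, head_out m' = head_out m & head_in m' = head_in mo].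
Proof.
move=> vU; case: m => /=.
- case: mo => //= [[p [a_p_v pU]]] _ vw; exists Fwd; split=> //.
  by exists (rcons p v); rewrite chain_rcons last_rcons all_rcons vU.
- move=> [p [v_p_a pU]] _; case: mo => /= [vw|wv|[v_w hy_vw]].
  + exists Bi; split=> //; exists [set v]; split.
    * by case: wfG => _ [_ [hy1 _]]; apply/hy1/(ed_vs vw).1.
    * by apply/subsetP => x /set1P ->; rewrite inE vU orbT.
    * by right; exists v, p; rewrite inE set11 vU.
    * by right; exists v, [::]; rewrite inE set11 vU.
  + by exists Bwd; split=> //; exists (v :: p); rewrite /= vU.
  + exists Bi; split=> //; exists [set v; w]; split=> //.
    * by apply/subsetP => x /set2P[] ->; rewrite !inE ?vU ?eqxx ?orbT.
    * by right; exists v, p; rewrite !inE eqxx vU.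
    * by left; rewrite !inE eqxx orbT.
- case: mo => //= [[F [hyF F_sub reach_a reach_v]]] _ vw; exists Bi; split=> //.
  exists F; split=> //.
    apply/subsetP => x /(subsetP F_sub); rewrite !inE.
    by case/orP=> [/orP[->|/eqP->]|->]; rewrite ?vU ?orbT.
  right; case: reach_v => [vF | [u [p [uFU [u_p_v pU]]]]].
    by exists v, [::]; rewrite inE vF vU.
  by exists u, (rcons p v); rewrite chain_rcons last_rcons all_rcons vU.
Qed.

Lemma marg_step_of_U_link m a v :
  a \in vs G :\: U -> v \in vs G :\: U -> U_link m a v -> (m = Bi -> a <> v) ->
  step_ok GU a m v.
Proof.
move=> a_GU v_GU; case: m => /= [link _|link _|[F [hyF F_sub reach_a reach_v]] /(_ erefl) a_v];
  [by [] | by [] |].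
have a_U : a \notin U by case/setDP: a_GU.
have v_U : v \notin U by case/setDP: v_GU.
split=> //; split; first by apply/subsetP => x /set2P[] ->.
exists F; split=> //; split=> // x /set2P[] ->; [case: reach_a | case: reach_v];
  by [left; rewrite inE ?a_U ?v_U | right].
Qed.

Lemma marg_walk_of_U_link s mi a m v :
  a \in vs G :\: U -> v \in vs G -> U_link m a v -> open_at GU Z mi a m ->
  steps_ok G v s -> junctions passable m v s -> path_end v s \notin U ->
  exists s', [/\ steps_ok GU a s', junctions (open_at GU Z) mi a s' & path_end a s' = path_end v s].
Proof.
(* A segment from [a] back to [a] would be a bidirected loop of the marginal
   graph; it is dropped. *)
have loopP (a' v' : T) m' : (m' = Bi /\ a' = v') \/ (m' = Bi -> a' <> v').
  by case: m'; [right|right|case: (eqVneq a' v') => [->|/eqP]; [left|right]].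
elim: s mi a m v => [|[mo w] s IH] mi a m v a_GU v_G link open_a /=.
  move=> _ _ vU; have [[_ <-]|not_loop] := loopP a v m; first by exists [::].
  have v_GU : v \in vs G :\: U by rewrite inE vU.
  by exists [:: (m, v)]; split=> //=; split=> //; apply: marg_step_of_U_link.
case=> v_w s_ok [pass_v J] end_U; have w_G := step_ok_vs vertex_closed_G v_w.
rewrite /passable in pass_v; case: ifPn pass_v => vU pass_v.
  have [m' [link' out' in']] := U_link_extend vU link pass_v v_w.
  apply: IH link' _ s_ok _ end_U => //.
    by rewrite /open_at (collider_heads (erefl (head_in mi)) out'); exact: open_a.
  apply: junctions_first J => mo'.
  by rewrite /passable /open_at /noncollider (collider_heads in' (erefl _)).
have v_GU : v \in vs G :\: U by rewrite inE vU.
have [[m_Bi a_v]|not_loop] := loopP a v m.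
  subst m v; apply: (IH mi a mo w a_GU w_G (U_link_step v_w)) => //.
  move: open_a pass_v; rewrite /open_at /collider /= andbT.
  by case: (head_in mi); case: (head_out mo).
have open_v : open_at GU Z m v mo.
  by move: pass_v; rewrite /open_at; case: ifP => // _ /(Anc_marg v_GU).
have [s' [s'_ok J' s'_end]] := IH m v mo w v_GU w_G (U_link_step v_w) open_v s_ok J end_U.
by exists ((m, v) :: s'); split=> //=; split=> //; apply: marg_step_of_U_link.
Qed.

Lemma marg_walk_of_passable s mi a :
  a \in vs G :\: U -> steps_ok G a s -> junctions passable mi a s -> path_end a s \notin U ->
  exists s', [/\ steps_ok GU a s', junctions (open_at GU Z) mi a s' & path_end a s' = path_end a s].
Proof.
case: s => [|[m b] s] a_GU /=; first by exists [::].
case=> a_m_b s_ok [pass_a J] end_U.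
have open_a : open_at GU Z mi a m.
  have aU : a \notin U by case/setDP: a_GU.
  move: pass_a; rewrite /passable (negbTE aU) /open_at.
  by case: ifP => // _ /(Anc_marg a_GU).
exact: marg_walk_of_U_link a_GU (step_ok_vs vertex_closed_G a_m_b) (U_link_step a_m_b) open_a
  s_ok J end_U.
Qed.

Lemma dsep_marg_of_dsep X Y : dsep G X Y Z -> dsep GU X Y Z.
Proof.
apply: dsep_of_open_transfer => v1 s [/andP[v1_GU _] s_ok] _ _ J.
have [s' [s'_ok J' s'_end]] := open_walk_of_marg v1_GU s_ok J.
exists s'; split=> //; apply: steps_ok_path vertex_closed_G _ s'_ok.
by case/setDP: v1_GU.
Qed.

Lemma dsep_of_dsep_marg X Y : [disjoint U & X :|: Y] -> dsep GU X Y Z -> dsep G X Y Z.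
Proof.
move=> UXY; apply: dsep_of_open_transfer => v1 s [/andP[v1_G _] s_ok] v1_XY end_XY J.
have v1_GU : v1 \in vs G :\: U by rewrite inE (disjointFl UXY v1_XY).
have [s1 [s1_ok J1 s1_end]] := open_walk_passable s_ok J.
have end_U : path_end v1 s1 \notin U by rewrite s1_end (disjointFl UXY end_XY).
have [s' [s'_ok J' s'_end]] := marg_walk_of_passable v1_GU s1_ok J1 end_U.
by exists s'; split=> //; [apply: steps_ok_path vertex_closed_marg _ s'_ok | rewrite s'_end].
Qed.

End Marginalization.

Theorem mainTheorem18 (T : finType) (G : hedg T) (X Y Z U : {set T}) :
  wf_hedg G ->
  X \subset vs G -> Y \subset vs G -> Z \subset vs G -> U \subset vs G ->
  [disjoint U & X :|: Y :|: Z] ->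
  (dsep G X Y Z <-> dsep (marg G U) X Y Z).
Proof.
move=> wfG _ _ Z_G _ disj.
have UZ : [disjoint U & Z] by apply: disjointWr disj; apply: subsetUr.
have UXY : [disjoint U & X :|: Y] by apply: disjointWr disj; apply: subsetUl.
by split; [apply: dsep_marg_of_dsep | apply: dsep_of_dsep_marg].
Qed.
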